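(* Let $1<r<\infty$ and let $X_n=(\mathbb{C}^n,\|\cdot\|)$ and $Y_n=(\mathbb{C}^n,\|\cdot\|)$ be Banach lattices with $M_{(r)}(X_n)=M^{(r)}(Y_n)=1$. Then for any index set $J\subset\mathbb{N}_0^n$, $$\boldsymbol{\chi_{\mathrm{mon}}}\big(\mathcal{P}_J(X_n)\big)\le\boldsymbol{\chi_{\mathrm{mon}}}\big(\mathcal{P}_J(Y_n)\big).$$
   Context: A Banach lattice $X_n=(\mathbb{C}^n,\|\cdot\|)$ is a norm with $\|z\|\le\|w\|$ whenever $|z_k|\le|w_k|$ for all $k$. The $r$-convexity constant $M^{(r)}(Y_n)$ is the least $C$ with $\|(\sum_k|x_k|^r)^{1/r}\|\le C(\sum_k\|x_k\|^r)^{1/r}$ for all finite families in $Y_n$; the $r$-concavity constant $M_{(r)}(X_n)$ is the least $C$ with $(\sum_k\|x_k\|^r)^{1/r}\le C\|(\sum_k|x_k|^r)^{1/r}\|$ (operations coordinatewise). $\mathcal{P}_J(X_n)$: polynomials $\sum_{\alpha\in J}c_\alpha z^\alpha$ with sup norm over the open unit ball. $\boldsymbol{\chi_{\mathrm{mon}}}(\mathcal{P}_J(X_n))$: least $K$ with $\|\sum\varepsilon_\alpha c_\alpha z^\alpha\|\le K\|\sum c_\alpha z^\alpha\|$ for all scalars and all $|\varepsilon_\alpha|=1$. *)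

From HB Require Import structures.
From mathcomp Require Import all_boot all_order all_algebra.
From mathcomp Require Import all_classical all_reals all_analysis.
From mathcomp Require Import complex.

Set Implicit Arguments.
Unset Strict Implicit.
Unset Printing Implicit Defensive.

Import Order.TTheory GRing.Theory Num.Theory.
Local Open Scope classical_set_scope.
Local Open Scope ring_scope.

Section Defs.
Variable R : realType.

Definition cabs (z : R[i]) : R := Num.sqrt (complex.Re z ^+ 2 + complex.Im z ^+ 2).

Definition cvec (n : nat) := 'I_n -> R[i].

Definition mindex (n : nat) := {ffun 'I_n -> nat}.

(* N is a norm on C^n which is a (complex) Banach lattice norm:
   |z_k| <= |w_k| for all k implies N z <= N w.
   (Completeness is automatic in finite dimension.) *)
Definition lattice_norm (n : nat) (N : cvec n -> R) : Prop :=
  [/\ (forall z, N z = 0 -> z = (fun _ => 0)),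
      (forall (a : R[i]) z, N (fun k => a * z k) = cabs a * N z),
      (forall z w, N (fun k => z k + w k) <= N z + N w) &
      (forall z w, (forall k, cabs (z k) <= cabs (w k)) -> N z <= N w)].

Definition rsum (r : R) (m : nat) (f : 'I_m -> R) : R :=
  (\sum_(j < m) f j `^ r) `^ r^-1.

Definition rvec (r : R) (n m : nat) (x : 'I_m -> cvec n) : cvec n :=
  fun k => Complex (rsum r (fun j => cabs (x j k))) 0.

Definition r_convexity (r : R) (n : nat) (N : cvec n -> R) : \bar R :=
  ereal_inf [set C%:E | C in [set C : R | 0 <= C /\
     forall (m : nat) (x : 'I_m -> cvec n),
       N (rvec r x) <= C * rsum r (fun j => N (x j))]].

Definition r_concavity (r : R) (n : nat) (N : cvec n -> R) : \bar R :=
  ereal_inf [set C%:E | C in [set C : R | 0 <= C /\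
     forall (m : nat) (x : 'I_m -> cvec n),
       rsum r (fun j => N (x j)) <= C * N (rvec r x)]].

Definition monom (n : nat) (a : mindex n) (z : cvec n) : R[i] :=
  \prod_(k < n) z k ^+ a k.

Definition peval (n : nat) (s : seq (mindex n)) (c : mindex n -> R[i])
    (z : cvec n) : R[i] :=
  \sum_(a <- s) c a * monom a z.

Definition sup_norm (n : nat) (N : cvec n -> R) (s : seq (mindex n))
    (c : mindex n -> R[i]) : \bar R :=
  ereal_sup [set (cabs (peval s c z))%:E | z in [set z : cvec n | N z < 1]].

Definition mon_unc_const (n : nat) (N : cvec n -> R) (J : set (mindex n))
    (K : R) : Prop :=
  forall (s : seq (mindex n)) (c eps : mindex n -> R[i]),
    uniq s -> (forall a, a \in s -> J a) ->
    (forall a, cabs (eps a) = 1) ->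
    (sup_norm N s (fun a => (eps a * c a)%R) <= K%:E * sup_norm N s c)%E.

Definition chi_mon (n : nat) (N : cvec n -> R) (J : set (mindex n)) : \bar R :=
  ereal_inf [set K%:E | K in [set K : R | 0 <= K /\ mon_unc_const N J K]].

End Defs.

(* For w in the open unit ball of X_n we find a positive diagonal u and a point z of
   the open unit ball of Y_n with w = u z and u B(Y_n) contained in B(X_n); composing
   polynomials with u then transports unconditional constants of P_J(Y_n) to P_J(X_n).
   The factorization is done on the positive cone, for phi b = ||b^(1/r)||_X^r, which
   is concave by r-concavity, and psi b = ||b^(1/r)||_Y^r, which is convex by
   r-convexity.  A finite-dimensional Hahn-Banach argument gives a supergradient G of
   phi at a = (|w| + e)^r, so the weights beta = G a have total mass phi a < 1.  An
   approximate maximizer c of sum_k beta_k ln c_k over the positive unit ball of psi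
   (Lozanovskii's argument) then satisfies sum_k beta_k t_k / c_k < 1 on that ball,
   and u = (a / c)^(1/r), up to a factor close to 1, does the job. *)

From mathcomp Require Import all_boot all_order all_algebra.
From mathcomp Require Import all_classical all_reals all_analysis.
From mathcomp Require Import complex.
From mathcomp Require Import ring lra.

Set Implicit Arguments.
Unset Strict Implicit.
Unset Printing Implicit Defensive.
Import Order.TTheory GRing.Theory Num.Theory.
Local Open Scope classical_set_scope.
Local Open Scope ring_scope.

Section Infimum.
Variable R : realType.

Lemma inf_img_le {T : Type} (P : set T) (f : T -> R) (m : R) (t : T) :
  (forall s, P s -> m <= f s) -> P t -> inf [set f s | s in P] <= f t.
Proof.
move=> hm Pt; apply: ge_inf; last by exists t.
by exists m => _ [s Ps <-]; exact: hm.
Qed.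

Lemma le_inf_img {T : Type} (P : set T) (f : T -> R) (y : R) :
  P !=set0 -> (forall s, P s -> y <= f s) -> y <= inf [set f s | s in P].
Proof.
move=> [t Pt] hy; apply: lb_le_inf; first by exists (f t), t.
by move=> _ [s Ps <-]; exact: hy.
Qed.

Lemma le_inf_imgD {T T' : Type} (P : set T) (P' : set T') (f : T -> R)
    (g : T' -> R) (y : R) :
  P !=set0 -> P' !=set0 -> (forall s t, P s -> P' t -> y <= f s + g t) ->
  y <= inf [set f s | s in P] + inf [set g t | t in P'].
Proof.
move=> hP hP' h; rewrite -lerBlDr; apply: le_inf_img => // s Ps.
rewrite lerBlDr addrC -lerBlDr; apply: le_inf_img => // t P't.
by rewrite lerBlDr addrC; exact: h.
Qed.

End Infimum.

Section Vectors.
Variables (R : realType) (n : nat).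
Local Notation vec := ('I_n -> R).

Definition nonneg (b : vec) := forall k, 0 <= b k.

Definition norm1 (x : vec) : R := \sum_k `|x k|.

Lemma norm1_ge0 x : 0 <= norm1 x.
Proof. by apply: sumr_ge0 => k _. Qed.

Lemma norm10 : norm1 0 = 0.
Proof. by rewrite /norm1 big1 // => k _; rewrite normr0. Qed.

Lemma norm1D x y : norm1 (x + y) <= norm1 x + norm1 y.
Proof. by rewrite /norm1 -big_split; apply: ler_sum => k _; exact: ler_normD. Qed.

Lemma norm1Z (l : R) x : norm1 (l *: x) = `|l| * norm1 x.
Proof. by rewrite /norm1 mulr_sumr; apply: eq_bigr => k _; rewrite normrM. Qed.

Lemma norm1_distC x y : norm1 (x - y) = norm1 (y - x).
Proof. by apply: eq_bigr => k _; rewrite distrC. Qed.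

Lemma norm1_eq0 x : norm1 x = 0 -> x = 0.
Proof.
move/eqP; rewrite psumr_eq0 // => /allP x0; apply: funext => k.
by apply/eqP; rewrite -normr_eq0; apply: x0; rewrite mem_index_enum.
Qed.

Lemma le_norm1 x k : x k <= norm1 x.
Proof.
apply: le_trans (ler_norm _) _.
by rewrite /norm1 (bigD1 k) //= lerDl; apply: sumr_ge0.
Qed.

Lemma nonneg0 : nonneg 0. Proof. by []. Qed.

Definition dot (g x : vec) : R := \sum_k g k * x k.

Definition basis_vec (j : 'I_n) : vec := fun k => (k == j)%:R.

Lemma dotC g x : dot g x = dot x g.
Proof. by apply: eq_bigr => k _; rewrite mulrC. Qed.

Lemma dotDr g x y : dot g (x + y) = dot g x + dot g y.
Proof. by rewrite /dot -big_split; apply: eq_bigr => k _; rewrite mulrDr. Qed.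

Lemma dotZr g (l : R) x : dot g (l *: x) = l * dot g x.
Proof. by rewrite /dot mulr_sumr; apply: eq_bigr => k _; rewrite mulrCA. Qed.

Lemma dotNr g x : dot g (- x) = - dot g x.
Proof. by rewrite -scaleN1r dotZr mulN1r. Qed.

Lemma dot_basisr g j : dot g (basis_vec j) = g j.
Proof.
rewrite /dot (bigD1 j) //= /basis_vec eqxx mulr1 big1 ?addr0 // => k /negbTE ->.
by rewrite mulr0.
Qed.

Lemma basis_vec_ge0 j : nonneg (basis_vec j).
Proof. by move=> k; rewrite /basis_vec ler0n. Qed.

Definition cone_homogeneous (f : vec -> R) :=
  forall (l : R) b, 0 <= l -> nonneg b -> f (l *: b) = l * f b.

Definition cone_monotone (f : vec -> R) :=
  forall b b', nonneg b -> (forall k, b k <= b' k) -> f b <= f b'.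

Lemma cone_homogeneous0 f : cone_homogeneous f -> f 0 = 0.
Proof. by move=> fZ; rewrite -(scale0r (0 : vec)) fZ // mul0r. Qed.

Lemma cone_monotone_ge0 f : cone_homogeneous f -> cone_monotone f ->
  forall b, nonneg b -> 0 <= f b.
Proof. by move=> fZ fmono b hb; rewrite -(cone_homogeneous0 fZ); exact: fmono. Qed.

End Vectors.

Arguments basis_vec {R n} j.
Arguments nonneg0 {R n}.

Section FiniteHahnBanach.
Variables (R : realType) (n : nat).
Local Notation vec := ('I_n -> R).

Definition sublinear (p : vec -> R) :=
  (forall x y, p (x + y) <= p x + p y) /\
  (forall (l : R) x, 0 <= l -> p (l *: x) = l * p x).

Lemma sublinear0 p : sublinear p -> p 0 = 0.
Proof. by case=> _ hZ; rewrite -(scale0r (0 : vec)) hZ // mul0r. Qed.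

(* Homogeneity only needs to be checked as an inequality,
   since p x = p (l^-1 *: (l *: x)). *)
Lemma sublinear_intro p :
  (forall x y, p (x + y) <= p x + p y) -> p 0 = 0 ->
  (forall (l : R) x, 0 < l -> p (l *: x) <= l * p x) -> sublinear p.
Proof.
move=> hD h0 hZ; split=> // l x; rewrite le_eqVlt => /predU1P[<-|l0].
  by rewrite scale0r mul0r.
apply/eqP; rewrite eq_le hZ //= -ler_pdivlMl //.
by rewrite -[X in p X](scalerK (lt0r_neq0 l0)) hZ ?invr_gt0.
Qed.

Section Slice.
Variables (p : vec -> R) (v : vec) (D : set R).
Hypothesis p_sublinear : sublinear p.
Hypothesis D0 : D 0.
Hypothesis DD : forall s t, D s -> D t -> D (s + t).
Hypothesis DZ : forall l t, 0 < l -> D t -> D (l * t).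
Hypothesis D_ge : forall t, D t -> t * p v <= p (t *: v).

(* One step of the Hahn-Banach argument: a linear minorant of [slice] that ignores
   the direction v extends, with slope [p v] along v, to a linear minorant of p. *)
Definition slice (x : vec) : R := inf [set p (x + t *: v) - t * p v | t in D].

Lemma slice_bounded x t : D t -> - p (- x) <= p (x + t *: v) - t * p v.
Proof.
move=> Dt; have := D_ge Dt; have := p_sublinear.1 (x + t *: v) (- x).
by rewrite addrC addKr; lra.
Qed.

Lemma slice_le x t : D t -> slice x <= p (x + t *: v) - t * p v.
Proof. by apply: inf_img_le => s; exact: slice_bounded. Qed.

Lemma slice_le_self x : slice x <= p x.
Proof. by have := slice_le x D0; rewrite scale0r addr0 mul0r subr0. Qed.

Lemma slice_sublinear : sublinear slice.
Proof.
apply: sublinear_intro.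
- move=> x y; apply: le_inf_imgD; [by exists 0|by exists 0|] => s t Ds Dt.
  apply: le_trans (slice_le (x + y) (DD Ds Dt)) _.
  have := p_sublinear.1 (x + s *: v) (y + t *: v).
  by rewrite addrACA -scalerDl; lra.
- apply/eqP; rewrite eq_le; apply/andP; split.
    by have := slice_le_self 0; rewrite (sublinear0 p_sublinear).
  apply: le_inf_img; first by exists 0.
  by move=> t Dt; have := slice_bounded 0 Dt; rewrite oppr0 (sublinear0 p_sublinear) oppr0.
- move=> l x l0; rewrite -ler_pdivrMl //; apply: le_inf_img; first by exists 0.
  move=> t Dt; rewrite ler_pdivrMl //; apply: le_trans (slice_le _ (DZ l0 Dt)) _.
  rewrite -scalerA -scalerDr p_sublinear.2; last exact: ltW.
  by rewrite mulrBr mulrA.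
Qed.

End Slice.

Lemma sublinear_minorant (s : seq 'I_n) p : sublinear p ->
  exists g, forall x, (forall k, k \notin s -> x k = 0) -> dot g x <= p x.
Proof.
elim: s p => [|j s IH] p hp.
  exists 0 => x hx; have -> : x = 0 by apply: funext => k; exact: hx.
  by rewrite (sublinear0 hp) /dot big1 // => k _; rewrite mul0r.
have D_ge t : setT t -> t * p (basis_vec j) <= p (t *: basis_vec j).
  move=> _; case: (leP 0 t) => t0; first by rewrite hp.2.
  rewrite -[t]opprK scaleNr -scalerN hp.2; last by rewrite oppr_ge0 ltW.
  have := hp.1 (basis_vec j) (- basis_vec j); rewrite subrr (sublinear0 hp); nra.
have [g hg] := IH _ (slice_sublinear hp I (fun _ _ _ _ => I) (fun _ _ _ _ => I) D_ge).
exists (g + (p (basis_vec j) - g j) *: basis_vec j) => x hx.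
pose x' : vec := x - x j *: basis_vec j.
have x'_supp k : k \notin s -> x' k = 0.
  have -> : x' k = x k - x j * (k == j)%:R by [].
  move=> ks; have [->|kj] := eqVneq k j; first by rewrite mulr1 subrr.
  by rewrite mulr0 subr0 hx // in_cons negb_or kj.
have gx' : dot g x' = dot g x - x j * g j by rewrite /x' dotDr dotNr dotZr dot_basisr.
have px' : p (x' + x j *: basis_vec j) = p x by rewrite subrK.
have gx : dot (g + (p (basis_vec j) - g j) *: basis_vec j) x =
    dot g x + (p (basis_vec j) - g j) * x j.
  by rewrite dotC dotDr dotZr dotC dot_basisr -dotC.
have := hg _ x'_supp; have := slice_le hp D_ge x' (t := x j) I.
rewrite gx gx' px'; lra.
Qed.

Lemma sublinear_support p a : sublinear p ->
  exists g, (forall x, dot g x <= p x) /\ dot g a = p a.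
Proof.
(* Slicing along a itself, with t >= 0, forces the minorant to touch p at a. *)
move=> hp; pose D := [set t : R | 0 <= t].
have D_ge t : D t -> t * p a <= p (t *: a) by move=> t0; rewrite hp.2.
have hq := slice_sublinear hp (lexx 0) (@addr_ge0 _) (fun l t l0 => mulr_ge0 (ltW l0)) D_ge.
have [g hg] := sublinear_minorant (enum 'I_n) hq.
have g_le x : dot g x <= slice p a D x by apply: hg => k; rewrite mem_enum.
exists g; split=> [x|]; first exact: le_trans (g_le x) (slice_le_self hp (lexx 0) D_ge x).
apply/eqP; rewrite eq_le (le_trans (g_le a) (slice_le_self hp (lexx 0) D_ge a)) /=.
have := le_trans (g_le (- a)) (slice_le hp D_ge (- a) ler01).
by rewrite scale1r addNr sublinear0 // mul1r dotNr; lra.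
Qed.

End FiniteHahnBanach.

Section Supergradient.
Variables (R : realType) (n : nat).
Local Notation vec := ('I_n -> R).

Variable phi : vec -> R.
Hypothesis phiZ : cone_homogeneous phi.
Hypothesis phi_superadd :
  forall b b', nonneg b -> nonneg b' -> phi b + phi b' <= phi (b + b').
Hypothesis phi_mono : cone_monotone phi.

Let phi0 : phi 0 = 0 := cone_homogeneous0 phiZ.
Let phi_ge0 : forall b, nonneg b -> 0 <= phi b := cone_monotone_ge0 phiZ phi_mono.

Lemma phi_le_norm1 b : nonneg b -> phi b <= phi 1 * norm1 b.
Proof.
move=> hb; rewrite mulrC -phiZ ?norm1_ge0 //; apply: phi_mono => // k.
by rewrite [X in _ <= X]mulr1; exact: le_norm1.
Qed.

Variables (a : vec) (m : R).
Hypothesis m_gt0 : 0 < m.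
Hypothesis a_ge : forall k, m <= a k.

Lemma a_nonneg : nonneg a.
Proof. by move=> k; exact: le_trans (ltW m_gt0) (a_ge k). Qed.

(* Concavity at an interior point: a is a convex combination of b and of a point y
   of the cone lying on the far side of a. *)
Lemma phi_le_lipschitz b : nonneg b -> phi b <= phi a + phi a / m * norm1 (b - a).
Proof.
move=> hb; set s := norm1 (b - a).
have [s0|s_neq0] := eqVneq s 0.
  by rewrite s0 mulr0 addr0 -(subrK a b) (norm1_eq0 s0) add0r.
have s_gt0 : 0 < s by rewrite lt_def s_neq0 norm1_ge0.
have sm_gt0 : 0 < s + m by rewrite addr_gt0.
pose y : vec := a - (m / s) *: (b - a).
have hy : nonneg y.
  move=> k; rewrite [y k]/(a k - m / s * (b k - a k)) subr_ge0.
  have : m / s * (b k - a k) <= m / s * s.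
    by apply: ler_wpM2l; [rewrite divr_ge0 ?ltW | exact: le_norm1 (b - a) k].
  by rewrite divfK // => /le_trans; apply.
have ea : a = (s / (s + m)) *: y + (m / (s + m)) *: b.
  apply: funext => k.
  change (a k = s / (s + m) * (a k - m / s * (b k - a k)) + m / (s + m) * b k).
  by field; rewrite s_neq0 gt_eqF.
have c1 : 0 <= s / (s + m) by apply: divr_ge0; exact: ltW.
have c2 : 0 <= m / (s + m) by apply: divr_ge0; exact: ltW.
have := @phi_superadd (_ *: y) (_ *: b) (fun k => mulr_ge0 c1 (hy k))
  (fun k => mulr_ge0 c2 (hb k)).
rewrite -ea (phiZ c1 hy) (phiZ c2 hb) => hsup.
have key : m / (s + m) * phi b <= phi a.
  have := mulr_ge0 c1 (phi_ge0 hy); lra.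
have -> : phi a + phi a / m * s = (s + m) / m * phi a by field; rewrite gt_eqF.
by rewrite -ler_pdivrMl ?divr_gt0 // invf_div.
Qed.

Definition lipschitz_const := phi 1 + phi a / m.

Lemma lipschitz_const_ge0 : 0 <= lipschitz_const.
Proof.
by rewrite addr_ge0 ?phi_ge0 //; apply: divr_ge0; [exact: phi_ge0 a_nonneg|exact: ltW].
Qed.

Lemma phi_le_lipschitz_const b : nonneg b -> phi b <= lipschitz_const * norm1 b.
Proof.
move=> hb; apply: le_trans (phi_le_norm1 hb) _; rewrite ler_wpM2r ?norm1_ge0 //.
by rewrite lerDl; apply: divr_ge0; [exact: phi_ge0 a_nonneg|exact: ltW].
Qed.

Local Notation L := lipschitz_const.

(* The largest L-Lipschitz function (for the l1 norm) lying below -phi on the cone. *)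
Definition cone_ext (x : vec) : R := inf [set L * norm1 (x - b) - phi b | b in @nonneg R n].

Lemma cone_ext_bounded x b : nonneg b -> - (L * norm1 x) <= L * norm1 (x - b) - phi b.
Proof.
move=> hb; have := phi_le_lipschitz_const hb.
have : norm1 b <= norm1 (x - b) + norm1 x by rewrite norm1_distC -{1}(subrK x b) norm1D.
move/(ler_wpM2l lipschitz_const_ge0); lra.
Qed.

Lemma cone_ext_le x b : nonneg b -> cone_ext x <= L * norm1 (x - b) - phi b.
Proof. by apply: inf_img_le => c; exact: cone_ext_bounded. Qed.

Lemma cone_ext_le_opp b : nonneg b -> cone_ext b <= - phi b.
Proof.
move=> hb; have := cone_ext_le b hb.
by rewrite subrr norm10 mulr0 sub0r.
Qed.

Lemma cone_ext_sublinear : sublinear cone_ext.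
Proof.
apply: sublinear_intro.
- move=> x y; apply: le_inf_imgD; [by exists 0|by exists 0|] => b b' hb hb'.
  apply: le_trans (cone_ext_le (x + y) (fun k => addr_ge0 (hb k) (hb' k))) _.
  have := norm1D (x - b) (y - b'); rewrite addrACA -opprD.
  move/(ler_wpM2l lipschitz_const_ge0); have := phi_superadd hb hb'; lra.
- apply/eqP; rewrite eq_le; apply/andP; split.
    by have := cone_ext_le_opp nonneg0; rewrite phi0 oppr0.
  apply: le_inf_img; first by exists 0.
  by move=> b hb; have := cone_ext_bounded 0 hb; rewrite norm10 mulr0 oppr0.
- move=> l x l0; rewrite -ler_pdivrMl //; apply: le_inf_img; first by exists 0.
  move=> b hb; rewrite ler_pdivrMl //.
  have hlb : nonneg (l *: b) by move=> k; exact: mulr_ge0 (ltW l0) (hb k).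
  apply: le_trans (cone_ext_le _ hlb) _.
  by rewrite -scalerBr norm1Z gtr0_norm // (phiZ (ltW l0) hb) mulrBr mulrCA.
Qed.

Lemma cone_ext_at : cone_ext a = - phi a.
Proof.
apply/eqP; rewrite eq_le; apply/andP; split; first exact: cone_ext_le_opp a_nonneg.
apply: le_inf_img; first by exists 0.
move=> b hb; have := phi_le_lipschitz hb; rewrite norm1_distC.
have : 0 <= phi 1 * norm1 (a - b) by rewrite mulr_ge0 ?phi_ge0 ?norm1_ge0.
rewrite /L /lipschitz_const mulrDl; lra.
Qed.

Theorem supergradient_exists :
  exists G, (forall b, nonneg b -> phi b <= dot G b) /\ dot G a = phi a.
Proof.
have [g [g_le g_at]] := sublinear_support a cone_ext_sublinear.
have dotNl x : dot (- g) x = - dot g x by rewrite dotC dotNr dotC.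
exists (- g); split; last by rewrite dotNl g_at cone_ext_at opprK.
by move=> b hb; rewrite dotNl; have := g_le b; have := cone_ext_le_opp hb; lra.
Qed.

End Supergradient.

Lemma ln1D_ge (R : realType) (z : R) : -1/2 <= z -> z - 2 * z ^+ 2 <= ln (1 + z).
Proof.
move=> hz; have hz1 : 0 < 1 + z by lra.
have : ln ((1 + z)^-1) <= (1 + z)^-1 - 1.
  have := @le_ln1Dx R ((1 + z)^-1 - 1); rewrite (addrC 1 ((1 + z)^-1 - 1)) subrK; apply.
  have : 0 < (1 + z)^-1 by rewrite invr_gt0.
  lra.
rewrite lnV ?posrE //.
have -> : (1 + z)^-1 = 1 - z + z ^+ 2 / (1 + z) by field; rewrite gt_eqF.
have : z ^+ 2 / (1 + z) <= 2 * z ^+ 2.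
  rewrite ler_pdivrMr //; have := sqr_ge0 z; nra.
lra.
Qed.

Section Lozanovskii.
Variables (R : realType) (n : nat).
Local Notation vec := ('I_n -> R).

Variable psi : vec -> R.
Hypothesis psiZ : cone_homogeneous psi.
Hypothesis psi_subadd :
  forall b b', nonneg b -> nonneg b' -> psi (b + b') <= psi b + psi b'.
Hypothesis psi_mono : cone_monotone psi.
Hypothesis psi_basis_gt0 : forall k, 0 < psi (basis_vec k).
Variable beta : vec.
Hypothesis beta_gt0 : forall k, 0 < beta k.

Definition pos_ball (c : vec) := (forall k, 0 < c k) /\ psi c <= 1.

Definition radius (k : 'I_n) : R := (psi (basis_vec k))^-1.

Lemma pos_ball_le_radius t : nonneg t -> psi t <= 1 -> forall k, t k <= radius k.
Proof.
move=> ht t1 k; have e_ge0 := basis_vec_ge0 R k.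
have : psi (t k *: basis_vec k) <= 1.
  apply: le_trans t1; apply: psi_mono => j; first exact: mulr_ge0 (ht k) (e_ge0 j).
  change (t k * (j == k)%:R <= t j); have [->|_] := eqVneq j k.
    by rewrite mulr1.
  by rewrite mulr0.
by rewrite psiZ // -ler_pdivlMr // mul1r.
Qed.

Lemma pos_ball_nonempty : exists c, pos_ball c.
Proof.
have psi1 : 0 <= psi 1 by apply: cone_monotone_ge0 => // k; exact: ler01.
exists ((psi 1 + 1)^-1 *: (1 : vec)); split=> [k|].
  by change (0 < (psi 1 + 1)^-1 * 1); rewrite mulr1 invr_gt0; lra.
rewrite psiZ ?invr_ge0; [|lra|by move=> k; exact: ler01].
by rewrite mulrC ler_pdivrMr; lra.
Qed.

Definition log_potential (c : vec) : R := \sum_k beta k * ln (c k).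

Definition log_potential_bound : R := \sum_k beta k * ln (radius k).

Lemma log_potential_le c : pos_ball c -> log_potential c <= log_potential_bound.
Proof.
move=> [c_gt0 c1]; apply: ler_sum => k _; apply: ler_wpM2l; first exact: ltW.
rewrite ler_ln ?posrE ?invr_gt0 //; apply: pos_ball_le_radius => // j.
exact: ltW.
Qed.

Definition log_potentials := [set log_potential c | c in pos_ball].

Lemma log_potentials_has_sup : has_sup log_potentials.
Proof.
have [c hc] := pos_ball_nonempty.
split; first by exists (log_potential c), c.
by exists log_potential_bound => _ [c' hc' <-]; exact: log_potential_le.
Qed.

Local Notation Fsup := (sup log_potentials).

Lemma log_potential_le_sup c : pos_ball c -> log_potential c <= Fsup.
Proof. by move=> hc; apply: sup_upper_bound; [exact: log_potentials_has_sup|exists c]. Qed.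

Local Notation slack := (log_potential_bound - Fsup + 1).

Definition ratio_max (k : 'I_n) : R := expR (slack / beta k).

(* A near-maximizer cannot have a very small coordinate, since every other term of
   the log-potential is bounded by log_potential_bound. *)
Lemma radius_div_lt c : pos_ball c -> Fsup - 1 < log_potential c ->
  forall k, radius k / c k < ratio_max k.
Proof.
move=> [c_gt0 c1] hF k.
have rad_gt0 j : 0 < radius j by rewrite invr_gt0.
have : log_potential c - log_potential_bound <= beta k * (ln (c k) - ln (radius k)).
  rewrite -sumrB (bigD1 k) //= -mulrBr gerDl; apply: sumr_le0 => j _.
  rewrite -mulrBr; apply: mulr_ge0_le0; first exact: ltW.
  rewrite subr_le0 ler_ln ?posrE //.
  by apply: pos_ball_le_radius => // i; exact: ltW.
move=> hk; rewrite -[X in X < _]lnK ?posrE ?divr_gt0 // ltr_expR ln_div ?posrE //.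
by rewrite ltr_pdivlMr //; lra.
Qed.

Definition sq_bound : R := \sum_k beta k * (1 + ratio_max k) ^+ 2.

Lemma sq_bound_ge0 : 0 <= sq_bound.
Proof. by apply: sumr_ge0 => k _; rewrite mulr_ge0 ?sqr_ge0 ?ltW. Qed.

Lemma pos_ball_convex c t (lam : R) : pos_ball c -> nonneg t -> psi t <= 1 ->
  0 < lam < 1 -> pos_ball ((1 - lam) *: c + lam *: t).
Proof.
move=> [c_gt0 c1] ht t1 /andP[lam0 lam1]; split=> [k|].
  have h1 : 0 < (1 - lam) * c k by rewrite mulr_gt0 ?subr_gt0.
  have h2 := mulr_ge0 (ltW lam0) (ht k).
  by change (0 < (1 - lam) * c k + lam * t k); lra.
have c_ge0 : nonneg c by move=> k; exact: ltW.
have l1 : 0 <= 1 - lam by rewrite subr_ge0 ltW.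
have hc' : nonneg ((1 - lam) *: c) by move=> k; exact: mulr_ge0 l1 (c_ge0 k).
have ht' : nonneg (lam *: t) by move=> k; exact: mulr_ge0 (ltW lam0) (ht k).
apply: le_trans (psi_subadd hc' ht') _.
rewrite (psiZ l1 c_ge0) (psiZ (ltW lam0) ht); nra.
Qed.

(* Moving from c towards t cannot increase the log-potential by more than
   Fsup - log_potential c; expanding the logarithm to second order bounds the
   first-order term. *)
Lemma log_potential_gain c t (lam : R) : pos_ball c -> Fsup - 1 < log_potential c ->
  nonneg t -> psi t <= 1 -> 0 < lam <= 1/2 ->
  lam * \sum_k beta k * (t k / c k - 1) - 2 * lam ^+ 2 * sq_bound <= Fsup - log_potential c.
Proof.
move=> hc hF ht t1 /andP[lam0 lam_half]; have [c_gt0 _] := hc.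
have y_ge k : -1 <= t k / c k - 1.
  by rewrite lerBrDr addNr; apply: divr_ge0; [exact: ht|exact: ltW].
have y_sq k : (t k / c k - 1) ^+ 2 <= (1 + ratio_max k) ^+ 2.
  have : t k / c k <= radius k / c k.
    by rewrite ler_pM2r ?invr_gt0 //; exact: pos_ball_le_radius.
  have := radius_div_lt hc hF k; have := expR_gt0 (slack / beta k).
  rewrite -/(ratio_max k) => L_gt0 rad_lt t_le.
  have h1 : 0 <= 1 + ratio_max k - (t k / c k - 1) by lra.
  have h2 : 0 <= 1 + ratio_max k + (t k / c k - 1) by have := y_ge k; lra.
  have := mulr_ge0 h1 h2; nra.
have hcl : pos_ball ((1 - lam) *: c + lam *: t).
  by apply: pos_ball_convex => //; rewrite lam0 /=; lra.
have gain : log_potential ((1 - lam) *: c + lam *: t) - log_potential c =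
    \sum_k beta k * ln (1 + lam * (t k / c k - 1)).
  rewrite -sumrB; apply: eq_bigr => k _; rewrite -mulrBr.
  have -> : ((1 - lam) *: c + lam *: t) k = c k * (1 + lam * (t k / c k - 1)).
    by change ((1 - lam) * c k + lam * t k = c k * (1 + lam * (t k / c k - 1)));
      field; rewrite gt_eqF.
  rewrite lnM ?posrE ?addrK //; have := y_ge k; nra.
have ln_ge : \sum_k beta k * (lam * (t k / c k - 1) - 2 * (lam * (t k / c k - 1)) ^+ 2)
    <= \sum_k beta k * ln (1 + lam * (t k / c k - 1)).
  apply: ler_sum => k _; apply: ler_wpM2l; first exact: ltW.
  by apply: ln1D_ge; have := y_ge k; nra.
have sq_le : lam * \sum_k beta k * (t k / c k - 1) - 2 * lam ^+ 2 * sq_bound <=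
    \sum_k beta k * (lam * (t k / c k - 1) - 2 * (lam * (t k / c k - 1)) ^+ 2).
  rewrite /sq_bound !mulr_sumr -sumrB; apply: ler_sum => k _.
  have := ler_wpM2l (mulr_ge0 (ltW (beta_gt0 k)) (sqr_ge0 lam)) (y_sq k); nra.
have := log_potential_le_sup hcl; rewrite -(subrK (log_potential c) (log_potential _)) gain.
lra.
Qed.

(* With lam of order eta and c within lam eta / 2 of the supremum, the bound of
   log_potential_gain leaves at most eta for the first-order term. *)
Theorem lozanovskii (eta : R) : 0 < eta <= 1 -> exists c, pos_ball c /\
  forall t, nonneg t -> psi t <= 1 -> \sum_k beta k * t k / c k <= \sum_k beta k + eta.
Proof.
move=> /andP[eta0 eta1]; have Q0 := sq_bound_ge0.
pose lam := eta / (4 * (sq_bound + 1)).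
have lam0 : 0 < lam by rewrite divr_gt0 //; lra.
have lamE : lam * (4 * (sq_bound + 1)) = eta by rewrite divfK //; lra.
have lam_half : lam <= 1/2 by nra.
have eps0 : 0 < lam * eta / 2 by apply: divr_gt0 => //; exact: mulr_gt0.
have [_ [c hc <-] hFc] := sup_adherent eps0 log_potentials_has_sup.
have hF : Fsup - 1 < log_potential c by nra.
exists c; split=> // t ht t1.
have := log_potential_gain hc hF ht t1 (lam := lam); rewrite lam0 lam_half => /(_ isT).
set S := \sum_k beta k * (t k / c k - 1) => hS.
have -> : \sum_k beta k * t k / c k = S + \sum_k beta k.
  by rewrite -big_split /=; apply: eq_bigr => k _; rewrite mulrBr mulr1 subrK mulrA.
suff : S - 2 * lam * sq_bound - eta / 2 < 0 by nra.
rewrite -(pmulr_rlt0 _ lam0); nra.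
Qed.

End Lozanovskii.

Section PowR.
Variables (R : realType) (r : R).
Hypothesis r_gt0 : 0 < r.

Lemma powRVK (y : R) : 0 <= y -> (y `^ r^-1) `^ r = y.
Proof. by move=> y0; rewrite -powRrM mulVf ?gt_eqF // powRr1. Qed.

Lemma powRK (y : R) : 0 <= y -> (y `^ r) `^ r^-1 = y.
Proof. by move=> y0; rewrite -powRrM mulfV ?gt_eqF // powRr1. Qed.

Lemma powR_le (x y : R) : 0 <= x -> x <= y -> x `^ r <= y `^ r.
Proof.
move=> x0 xy; apply: ge0_ler_powR; rewrite ?nnegrE //; first exact: ltW.
exact: le_trans xy.
Qed.

Lemma powR_lt1 (x : R) : 0 <= x -> (x `^ r < 1) = (x < 1).
Proof.
move=> x0; have one : (1 : R) `^ r = 1 by rewrite powR1.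
apply/idP/idP => [|x1]; last by rewrite -one gt0_ltr_powR ?nnegrE.
by apply: contraTT; rewrite -!leNgt => x1; rewrite -one; exact: powR_le ler01 x1.
Qed.

End PowR.

Local Open Scope complex_scope.

Section ComplexModulus.
Variable R : realType.

Lemma cabs_ge0 (z : R[i]) : 0 <= cabs z.
Proof. exact: sqrtr_ge0. Qed.

Lemma cabsM (x y : R[i]) : cabs (x * y) = cabs x * cabs y.
Proof.
case: x => a b; case: y => c d; rewrite /cabs /= -sqrtrM ?addr_ge0 ?sqr_ge0 //.
by congr Num.sqrt; ring.
Qed.

Lemma cabs_real (x : R) : 0 <= x -> cabs x%:C = x.
Proof. by move=> x0; rewrite /cabs /= expr0n /= addr0 sqrtr_sqr ger0_norm. Qed.

End ComplexModulus.

Section LatticeNorm.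
Variables (R : realType) (n : nat) (N : cvec R n -> R).
Hypothesis hN : lattice_norm N.

Lemma lattice_norm_le z w : (forall k, cabs (z k) <= cabs (w k)) -> N z <= N w.
Proof. by case: hN => _ _ _; apply. Qed.

Lemma lattice_norm_eq z w : (forall k, cabs (z k) = cabs (w k)) -> N z = N w.
Proof. by move=> h; apply/eqP; rewrite eq_le !lattice_norm_le // => k; rewrite h. Qed.

Lemma lattice_normD z w : N (fun k => z k + w k) <= N z + N w.
Proof. by case: hN. Qed.

Lemma lattice_normZ (l : R) z : 0 <= l -> N (fun k => l%:C * z k) = l * N z.
Proof. by case: hN => _ hZ _ _ l0; rewrite hZ cabs_real. Qed.

Lemma lattice_norm0 : N (fun _ => 0) = 0.
Proof.
rewrite -[RHS](mul0r (N (fun _ => 0))) -lattice_normZ //.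
by congr N; apply: funext => k; rewrite mulr0.
Qed.

Lemma lattice_norm_ge0 z : 0 <= N z.
Proof.
by rewrite -lattice_norm0; apply: lattice_norm_le => k; rewrite cabs_real ?cabs_ge0.
Qed.

Lemma lattice_norm_gt0 z k : z k != 0 -> 0 < N z.
Proof.
move=> zk; rewrite lt_def lattice_norm_ge0 andbT; apply: contra zk => /eqP N0.
by case: hN => h0 _ _ _; rewrite (h0 _ N0).
Qed.

End LatticeNorm.

Section Convexification.
Variables (R : realType) (n : nat) (N : cvec R n -> R) (r : R).
Hypothesis hN : lattice_norm N.
Hypothesis r_gt0 : 0 < r.
Local Notation vec := ('I_n -> R).

Definition convexification (b : vec) : R := N (fun k => (b k `^ r^-1)%:C) `^ r.

Lemma convexification_ge0 b : 0 <= convexification b.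
Proof. exact: powR_ge0. Qed.

Lemma convexification_cabs (z : cvec R n) :
  convexification (fun k => cabs (z k) `^ r) = N z `^ r.
Proof.
congr (_ `^ r); apply: lattice_norm_eq => // k.
by rewrite cabs_real ?powR_ge0 // powRK // cabs_ge0.
Qed.

Lemma convexification_homogeneous : cone_homogeneous convexification.
Proof.
move=> l b l0 hb; rewrite /convexification.
rewrite -[l in RHS](powRVK r_gt0 l0) -powRM ?powR_ge0 ?lattice_norm_ge0 //.
rewrite -lattice_normZ ?powR_ge0 //; congr (_ `^ r); apply: lattice_norm_eq => // k.
by rewrite cabsM !cabs_real ?powR_ge0 // -powRM.
Qed.

Lemma convexification_monotone : cone_monotone convexification.
Proof.
move=> b b' hb hbb; apply: powR_le; rewrite ?lattice_norm_ge0 //.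
apply: lattice_norm_le => // k; rewrite !cabs_real ?powR_ge0 //.
by apply: powR_le; rewrite ?invr_gt0.
Qed.

Lemma convexification_basis_gt0 k : 0 < convexification (basis_vec k).
Proof.
apply: powR_gt0; apply: (lattice_norm_gt0 hN (k := k)).
by rewrite /basis_vec eqxx powR1; exact: oner_neq0.
Qed.

Lemma convexification_lt1 b : convexification b < 1 -> N (fun k => (b k `^ r^-1)%:C) < 1.
Proof. by rewrite powR_lt1 ?lattice_norm_ge0. Qed.

End Convexification.

Lemma le_of_ereal_inf_eq1 (R : realType) (P : set R) (L Y : R) :
  ereal_inf [set C%:E | C in P] = 1%E -> 0 <= Y -> (forall C, P C -> L <= C * Y) ->
  L <= Y.
Proof.
move=> inf1 Y0 hP; apply/ler_addgt0Pr => e e0.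
have : (ereal_inf [set C%:E | C in P] < (1 + e / (Y + 1))%:E)%E.
  by rewrite inf1 lte_fin ltrDl divr_gt0 //; lra.
case/ereal_inf_lt => _ [C PC <-]; rewrite lte_fin => C_lt.
have : e / (Y + 1) * Y <= e by rewrite mulrAC ler_pdivrMr ?ler_pM2l //; lra.
have := ler_wpM2r Y0 (ltW C_lt); have := hP C PC; lra.
Qed.

Section ConcavityConvexity.
Variables (R : realType) (n : nat) (r : R) (N : cvec R n -> R).
Hypothesis r_gt0 : 0 < r.
Hypothesis hN : lattice_norm N.
Local Notation vec := ('I_n -> R).

Lemma r_concavity_eq1_le : r_concavity r N = 1%E ->
  forall m (x : 'I_m -> cvec R n), rsum r (fun j => N (x j)) <= N (rvec r x).
Proof.
move=> h m x; apply: le_of_ereal_inf_eq1 h (lattice_norm_ge0 hN _) _.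
by move=> C [_]; apply.
Qed.

Lemma r_convexity_eq1_le : r_convexity r N = 1%E ->
  forall m (x : 'I_m -> cvec R n), N (rvec r x) <= rsum r (fun j => N (x j)).
Proof. by move=> h m x; apply: le_of_ereal_inf_eq1 h (powR_ge0 _ _) _ => C [_]; apply. Qed.

Lemma rsum2 (f : 'I_2 -> R) :
  rsum r f = (f ord0 `^ r + f (lift ord0 ord0) `^ r) `^ r^-1.
Proof. by rewrite /rsum !big_ord_recl big_ord0 addr0. Qed.

Definition root_pair (b b' : vec) : 'I_2 -> cvec R n :=
  fun j => if j == ord0 then (fun k => (b k `^ r^-1)%:C) else (fun k => (b' k `^ r^-1)%:C).

Lemma rsum_root_pair b b' :
  rsum r (fun j => N (root_pair b b' j)) =
  (convexification N r b + convexification N r b') `^ r^-1.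
Proof. by rewrite rsum2. Qed.

Lemma rvec_root_pair b b' : nonneg b -> nonneg b' ->
  rvec r (root_pair b b') = (fun k => ((b + b') k `^ r^-1)%:C).
Proof.
move=> hb hb'; apply: funext => k; rewrite /rvec rsum2 /root_pair /=.
by rewrite !cabs_real ?powR_ge0 // !powRVK.
Qed.

Lemma convexification_superadd : r_concavity r N = 1%E ->
  forall b b', nonneg b -> nonneg b' ->
  convexification N r b + convexification N r b' <= convexification N r (b + b').
Proof.
move=> h b b' hb hb'; have := r_concavity_eq1_le h (root_pair b b').
rewrite rsum_root_pair rvec_root_pair // => /(powR_le r_gt0 (powR_ge0 _ _)).
by rewrite powRVK // addr_ge0 ?convexification_ge0.
Qed.

Lemma convexification_subadd : r_convexity r N = 1%E ->
  forall b b', nonneg b -> nonneg b' ->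
  convexification N r (b + b') <= convexification N r b + convexification N r b'.
Proof.
move=> h b b' hb hb'; have := r_convexity_eq1_le h (root_pair b b').
rewrite rsum_root_pair rvec_root_pair // => /(powR_le r_gt0 (lattice_norm_ge0 hN _)).
by rewrite powRVK // addr_ge0 ?convexification_ge0.
Qed.

End ConcavityConvexity.

Section ConeFactorization.
Variables (R : realType) (n : nat).
Local Notation vec := ('I_n -> R).
Variables phi psi : vec -> R.
Hypothesis phiZ : cone_homogeneous phi.
Hypothesis phi_superadd :
  forall b b', nonneg b -> nonneg b' -> phi b + phi b' <= phi (b + b').
Hypothesis phi_mono : cone_monotone phi.
Hypothesis phi_basis_gt0 : forall k, 0 < phi (basis_vec k).
Hypothesis psiZ : cone_homogeneous psi.
Hypothesis psi_subadd :
  forall b b', nonneg b -> nonneg b' -> psi (b + b') <= psi b + psi b'.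
Hypothesis psi_mono : cone_monotone psi.
Hypothesis psi_basis_gt0 : forall k, 0 < psi (basis_vec k).

(* With a supergradient G of phi at a, the weights beta = G a sum to phi a; a
   near-maximizer c of the log-potential for these weights gives d = a / (th c). *)
Theorem cone_factorization (a : vec) (m : R) : 0 < m -> (forall k, m <= a k) ->
  phi a < 1 -> exists d : vec, [/\ forall k, 0 < d k, psi (fun k => a k / d k) < 1 &
    forall t, nonneg t -> psi t <= 1 -> phi (fun k => d k * t k) < 1].
Proof.
move=> m_gt0 a_ge a1; have a_gt0 k : 0 < a k by exact: lt_le_trans (a_ge k).
have [G [G_ge G_at]] := supergradient_exists phiZ phi_superadd phi_mono m_gt0 a_ge.
have G_gt0 k : 0 < G k.
  by rewrite -(dot_basisr G k); apply: lt_le_trans (G_ge _ (basis_vec_ge0 _ _)).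
pose beta k := G k * a k.
have beta_gt0 k : 0 < beta k by rewrite mulr_gt0.
have A0 : 0 <= phi a by apply: cone_monotone_ge0 => // k; exact: ltW.
have [|c [[c_gt0 c1] c_dual]] := lozanovskii psiZ psi_subadd psi_mono psi_basis_gt0
  beta_gt0 (eta := (1 - phi a) / 4).
  by apply/andP; split; lra.
pose th := (1 + phi a) / 2.
have th_gt0 : 0 < th by rewrite /th; lra.
exists (fun k => a k / (th * c k)); split.
- by move=> k; apply: divr_gt0 => //; exact: mulr_gt0.
- have -> : (fun k => a k / (a k / (th * c k))) = th *: c.
    by apply: funext => k; rewrite invf_div mulrC divfK ?gt_eqF.
  have c_ge0 : nonneg c by move=> k; exact: ltW.
  rewrite (psiZ (ltW th_gt0) c_ge0); have := ler_wpM2l (ltW th_gt0) c1.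
  by rewrite /th; lra.
move=> t ht t1.
have dt_ge0 : nonneg (fun k => a k / (th * c k) * t k).
  move=> k; apply: mulr_ge0 _ (ht k); apply: ltW.
  by apply: divr_gt0 => //; exact: mulr_gt0.
apply: le_lt_trans (G_ge _ dt_ge0) _.
have -> : dot G (fun k => a k / (th * c k) * t k) = th^-1 * \sum_k beta k * t k / c k.
  rewrite /dot mulr_sumr; apply: eq_bigr => k _; rewrite /beta.
  by field; rewrite !gt_eqF.
have := c_dual t ht t1; rewrite -/(dot G a) G_at.
by rewrite ltr_pdivrMl // mulr1 /th; lra.
Qed.

End ConeFactorization.

Lemma lattice_ball_shift (R : realType) (n : nat) (N : cvec R n -> R) (w : cvec R n) :
  lattice_norm N -> N w < 1 -> exists2 e : R, 0 < e & N (fun k => (cabs (w k) + e)%:C) < 1.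
Proof.
move=> hN w1; set N1 := N (fun _ => 1).
have N1_ge0 : 0 <= N1 := lattice_norm_ge0 hN _.
have Nw_ge0 := lattice_norm_ge0 hN w.
exists ((1 - N w) / (2 * (N1 + 1))); first by apply: divr_gt0; lra.
set e := _ / _.
have e_ge0 : 0 <= e by apply: divr_ge0; lra.
have eN1 : e * N1 < 1 - N w.
  rewrite /e mulrAC ltr_pdivrMr; last by lra.
  by rewrite ltr_pM2l; lra.
apply: le_lt_trans (_ : N w + e * N1 < 1); last by lra.
have -> : (fun k => (cabs (w k) + e)%:C) = (fun k => (cabs (w k))%:C + e%:C * 1).
  by apply: funext => k; rewrite mulr1 rmorphD.
apply: le_trans (lattice_normD hN _ _) _; rewrite lattice_normZ //.
by rewrite (lattice_norm_eq hN (w := w)) // => k; rewrite cabs_real ?cabs_ge0.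
Qed.

Section NormFactorization.
Variables (R : realType) (n : nat) (r : R) (NX NY : cvec R n -> R).
Hypothesis r_gt0 : 0 < r.
Hypothesis hX : lattice_norm NX.
Hypothesis hY : lattice_norm NY.
Hypothesis hXc : r_concavity r NX = 1%E.
Hypothesis hYc : r_convexity r NY = 1%E.
Local Notation vec := ('I_n -> R).

Lemma convexification_diag_lt1 (d : vec) : (forall k, 0 < d k) ->
  (forall t, nonneg t -> convexification NY r t <= 1 ->
    convexification NX r (fun k => d k * t k) < 1) ->
  forall z, NY z < 1 -> NX (fun k => (d k `^ r^-1)%:C * z k) < 1.
Proof.
move=> d_gt0 hd z z1; rewrite -(powR_lt1 r_gt0) ?lattice_norm_ge0 //.
rewrite -(convexification_cabs hX r_gt0).
have -> : (fun k => cabs ((d k `^ r^-1)%:C * z k) `^ r) = (fun k => d k * cabs (z k) `^ r).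
  apply: funext => k; have d_ge0 := ltW (d_gt0 k).
  by rewrite cabsM cabs_real ?powR_ge0 // powRM ?powR_ge0 ?cabs_ge0 // powRVK.
apply: hd; first by move=> k; exact: powR_ge0.
rewrite (convexification_cabs hY r_gt0); apply: ltW.
by rewrite powR_lt1 ?lattice_norm_ge0.
Qed.

Theorem lattice_norm_factorization (w : cvec R n) : NX w < 1 ->
  exists (u : vec) (z : cvec R n), [/\ NY z < 1, forall k, w k = (u k)%:C * z k &
    forall z', NY z' < 1 -> NX (fun k => (u k)%:C * z' k) < 1].
Proof.
(* The shift by e keeps a away from 0, as supergradient_exists requires. *)
move=> w1; have [e e_gt0 x1] := lattice_ball_shift hX w1.
pose x k := cabs (w k) + e.
have x_ge k : e <= x k by rewrite lerDr cabs_ge0.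
have x_gt0 k : 0 < x k by exact: lt_le_trans (x_ge k).
pose a k := x k `^ r.
have a_ge k : e `^ r <= a k by apply: powR_le (ltW e_gt0) (x_ge k).
have a1 : convexification NX r a < 1.
  have -> : a = (fun k => cabs (x k)%:C `^ r).
    by apply: funext => k; rewrite cabs_real // ltW.
  by rewrite convexification_cabs // powR_lt1 ?lattice_norm_ge0.
have [d [d_gt0 ad1 hd]] := cone_factorization
  (convexification_homogeneous hX r_gt0) (convexification_superadd r_gt0 hX hXc)
  (convexification_monotone hX r_gt0) (convexification_basis_gt0 r hX)
  (convexification_homogeneous hY r_gt0) (convexification_subadd r_gt0 hY hYc)
  (convexification_monotone hY r_gt0) (convexification_basis_gt0 r hY)
  (powR_gt0 _ e_gt0) a_ge a1.
pose u k := d k `^ r^-1.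
have u_gt0 k : 0 < u k by exact: powR_gt0.
pose v k := (a k / d k) `^ r^-1.
have uv k : u k * v k = x k.
  have ad_ge0 : 0 <= a k / d k by rewrite divr_ge0 ?powR_ge0 // ltW.
  have d_ge0 : 0 <= d k by exact: ltW.
  rewrite /u /v -powRM // mulrCA mulfV ?gt_eqF // mulr1.
  by rewrite /a powRK // ltW.
exists u, (fun k => (u k)^-1%:C * w k); split.
- apply: le_lt_trans (convexification_lt1 hY r_gt0 ad1).
  apply: lattice_norm_le => // k.
  have ui_ge0 : 0 <= (u k)^-1 by rewrite invr_ge0 ltW.
  have v_ge0 : 0 <= v k by exact: powR_ge0.
  rewrite cabsM !cabs_real // -/(v k) -[v k](mulKf (lt0r_neq0 (u_gt0 k))) uv.
  by apply: ler_wpM2l => //; rewrite lerDl ltW.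
- by move=> k; rewrite mulrA -rmorphM mulfV ?gt_eqF // rmorph1 mul1r.
exact: convexification_diag_lt1 d_gt0 hd.
Qed.

End NormFactorization.

Lemma monomM (R : realType) n (al : mindex n) (x y : cvec R n) :
  monom al (fun k => x k * y k) = monom al x * monom al y.
Proof. by rewrite /monom -big_split /=; apply: eq_bigr => k _; rewrite exprMn. Qed.

Lemma peval_diag (R : realType) n (s : seq (mindex n)) (c : mindex n -> R[i])
    (u z : cvec R n) :
  peval s (fun al => c al * monom al u) z = peval s c (fun k => u k * z k).
Proof. by apply: eq_bigr => al _; rewrite monomM mulrA. Qed.

Theorem theorem2p12 (R : realType) (n : nat) (r : R) (hr : 1 < r)
    (NX NY : cvec R n -> R) (hX : lattice_norm NX) (hY : lattice_norm NY)
    (hXc : r_concavity r NX = 1%E) (hYc : r_convexity r NY = 1%E)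
    (J : set (mindex n)) :
  (chi_mon NX J <= chi_mon NY J)%E.
Proof.
have r_gt0 : 0 < r by exact: lt_trans hr.
apply: ereal_inf_le_tmp => _ [K [K0 hK] <-]; exists K => //.
split=> // s c eps s_uniq sJ eps1.
apply: ge_ereal_sup => _ [w w1 <-].
have [u [z [z1 wE u_ball]]] := lattice_norm_factorization r_gt0 hX hY hXc hYc w1.
pose U k := (u k)%:C.
pose cU al := c al * monom al U.
have -> : peval s (fun al => eps al * c al) w = peval s (fun al => eps al * cU al) z.
  rewrite (_ : w = fun k => U k * z k); last by apply: funext => k; exact: wE.
  by rewrite -peval_diag; apply: eq_bigr => al _; rewrite mulrA.
have z_le : ((cabs (peval s (fun al => (eps al * cU al)%R) z))%:E <=
    sup_norm NY s (fun al => (eps al * cU al)%R))%E by apply: ereal_sup_ubound; exists z.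
apply: le_trans z_le (le_trans (hK s cU eps s_uniq sJ eps1) _).
rewrite lee_wpmul2l ?lee_fin //; apply: ge_ereal_sup => _ [z' z'1 <-].
apply: ereal_sup_ubound; exists (fun k => U k * z' k); first exact: u_ball.
by rewrite peval_diag.
Qed.
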